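(* Let $\mathcal S=((x_n,r_n))_{n\ge1}$ be a system satisfying $\mathcal C_1$ with sequence $(N_j)$ and associated function $\psi$, let $((y_n,\rho_n))_{n\ge1}$ be its irreducible subsystem, and fix $\varphi\in\Phi$ (which determines $\gamma$). For $\delta>1$, $U\in\mathcal G_*$ and an integer $j\ge\delta g(U)$, let $$\widetilde{\mathcal Q}(U,j,\delta)=\Big\{V\in\mathcal G_j:\ V\subset U,\ V\cap\Big(\bigcup_{k=g(U)}^{\gamma(j)}\ \bigcup_{p\in\mathcal T_k}B(y_p,\rho_p^\delta)\Big)\ne\emptyset\Big\}.$$ Then there is a constant $C_d$ depending only on $d$ such that for all such $\delta,U,j$, $$\#\widetilde{\mathcal Q}(U,j,\delta)\le C_d\,2^{d(j-g(U))}\Big[2^{-dj\varphi(2^{-j})}+\sum_{g(U)\le k\le j/\delta}2^{-dk(\delta-1-\psi(2^{-k}))}\Big].$$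
   Context: Work in $\mathbb R^d$ with the $L^\infty$ norm; $B(x,r)=\{y:\|y-x\|\le r\}$, $|A|$ is the diameter of $A$. A system is a sequence $\mathcal S=((x_n,r_n))_{n\ge1}$ with $x_n\in[0,1]^d$ and $(r_n)$ non-increasing positive tending to $0$. Irreducible subsystem: $((y_n,\rho_n))_{n\ge1}$ is the subsequence of $((x_n,r_n))$ consisting of the indices $n$ with $n=\min\{p\ge1:x_p=x_n\}$. For $j\ge0$, $\mathcal T_j=\{n:2^{-(j+1)}<\rho_n\le2^{-j}\}$. Condition $\mathcal C_1$: there is a non-decreasing sequence of positive integers $(N_j)_{j\ge0}$ with $\lim_{j}(\log_2N_j)/j=0$ such that for every $j\ge1$, $\mathcal T_j$ decomposes into at most $N_j$ pairwise disjoint subsets $\mathcal T_{j,1},\dots,\mathcal T_{j,N_j}$, each having pairwise disjoint balls $B(y_n,\rho_n)$, $n\in\mathcal T_{j,i}$. $\psi:\mathbb R_+\to\mathbb R_+$ is continuous with $\psi(0)=0$ and $N_j=2^{dj\psi(2^{-j})}$. $\Phi$ is the set of functions $\varphi:\mathbb R_+\to\mathbb R_+$ that are non-decreasing, continuous, with $\varphi(0)=0$, such that $r\mapsto r^{-\varphi(r)}$ is decreasing and tends to $+\infty$ as $r\to0^+$, and for all $\alpha,\beta>0$ the map $r\mapsto r^{\alpha-\beta\varphi(r)}$ is increasing near $0$. $\gamma(j)=\max\{k\in\mathbb N:N_k2^{dk}\le2^{-dj\varphi(2^{-j})}2^{dj}\}$. $\mathcal G_j$ is the set of dyadic subcubes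 of $[0,1]^d$ of side $2^{-j}$, $\mathcal G_*=\bigcup_{j\ge1}\mathcal G_j$, $g(I)=-\log_2|I|$. *)

From Stdlib Require Import Reals Lra Lia List.
Open Scope R_scope.

(* Points of R^d are functions nat -> R; only coordinates i < d matter. *)
Definition pt := nat -> R.

Definition ball (d : nat) (c : pt) (rad : R) (y : pt) : Prop :=
  forall i, (i < d)%nat -> Rabs (y i - c i) <= rad.

(* A system ((x_n, r_n))_n (indexed from 0). *)
Definition is_system (d : nat) (x : nat -> pt) (r : nat -> R) : Prop :=
  (forall n i, (i < d)%nat -> 0 <= x n i <= 1) /\
  (forall n, 0 < r n) /\
  (forall n, r (S n) <= r n) /\
  Un_cv r 0.

(* n is an index of the irreducible subsystem: x_n is the first occurrence
   of its value. *)
Definition irred (d : nat) (x : nat -> pt) (n : nat) : Prop :=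
  forall p, (p < n)%nat -> ~ (forall i, (i < d)%nat -> x p i = x n i).

(* T_j, expressed with the original indices of the irreducible subsystem. *)
Definition T (d : nat) (x : nat -> pt) (r : nat -> R) (j n : nat) : Prop :=
  irred d x n /\ (/2) ^ (S j) < r n <= (/2) ^ j.

Definition log2 (t : R) : R := ln t / ln 2.

(* Condition C_1 with the given sequence N. The decomposition of T_j into at
   most N_j pairwise disjoint subsets is given by a labelling c j : T_j -> [0, N_j). *)
Definition cond_C1 (d : nat) (x : nat -> pt) (r : nat -> R) (N : nat -> nat) : Prop :=
  (forall j, (1 <= N j)%nat) /\
  (forall j, (N j <= N (S j))%nat) /\
  Un_cv (fun j => log2 (INR (N j)) / INR j) 0 /\
  exists c : nat -> nat -> nat,
    forall j, (1 <= j)%nat ->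
      (forall n, T d x r j n -> (c j n < N j)%nat) /\
      (forall n m, T d x r j n -> T d x r j m -> n <> m -> c j n = c j m ->
         ~ (exists y, ball d (x n) (r n) y /\ ball d (x m) (r m) y)).

Definition cont_nonneg (f : R -> R) : Prop :=
  forall t, 0 <= t -> limit1_in f (fun s => 0 <= s) (f t) t.

Definition psi_assoc (d : nat) (N : nat -> nat) (psi : R -> R) : Prop :=
  (forall t, 0 <= t -> 0 <= psi t) /\ cont_nonneg psi /\ psi 0 = 0 /\
  (forall j, INR (N j) = Rpower 2 (INR d * INR j * psi ((/2) ^ j))).

Definition inPhi (phi : R -> R) : Prop :=
  (forall t, 0 <= t -> 0 <= phi t) /\
  (forall s t, 0 <= s <= t -> phi s <= phi t) /\
  cont_nonneg phi /\ phi 0 = 0 /\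
  (forall s t, 0 < s < t -> Rpower t (- phi t) < Rpower s (- phi s)) /\
  (forall M, exists eps, 0 < eps /\
     forall t, 0 < t < eps -> M < Rpower t (- phi t)) /\
  (forall a b, 0 < a -> 0 < b -> exists eps, 0 < eps /\
     forall s t, 0 < s < t -> t < eps ->
       Rpower s (a - b * phi s) < Rpower t (a - b * phi t)).

Definition gamma_set (d : nat) (N : nat -> nat) (phi : R -> R) (j k : nat) : Prop :=
  INR (N k) * Rpower 2 (INR d * INR k)
    <= Rpower 2 (- (INR d * INR j * phi ((/2) ^ j))) * Rpower 2 (INR d * INR j).

Definition is_gamma (d : nat) (N : nat -> nat) (phi : R -> R) (j g : nat) : Prop :=
  gamma_set d N phi j g /\ forall k, gamma_set d N phi j k -> (k <= g)%nat.

(* Dyadic cubes: a level l and integer coordinates a (a list of length d with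
   entries < 2^l) represent the closed cube prod_i [a_i 2^-l, (a_i+1) 2^-l]. *)
Definition is_dyadic (d l : nat) (a : list nat) : Prop :=
  length a = d /\ forall i, (i < d)%nat -> (nth i a 0%nat < 2 ^ l)%nat.

Definition cube (d l : nat) (a : list nat) (y : pt) : Prop :=
  forall i, (i < d)%nat ->
    INR (nth i a 0%nat) * (/2) ^ l <= y i <= (INR (nth i a 0%nat) + 1) * (/2) ^ l.

(* The set Q~(U, j, delta), U = cube of level gU (so g(U) = gU) with coordinates aU;
   elements are the coordinate lists b of cubes V in G_j. *)
Definition Qtilde (d : nat) (x : nat -> pt) (r : nat -> R) (N : nat -> nat)
    (phi : R -> R) (gU : nat) (aU : list nat) (j : nat) (delta : R) (b : list nat) : Prop :=
  is_dyadic d j b /\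
  (forall y, cube d j b y -> cube d gU aU y) /\
  exists y, cube d j b y /\
    exists k, (exists g, is_gamma d N phi j g /\ (gU <= k <= g)%nat) /\
      exists p, T d x r k p /\ ball d (x p) (Rpower (r p) delta) y.

Definition card_le (A : list nat -> Prop) (M : R) : Prop :=
  forall l : list (list nat), NoDup l -> (forall b, In b l -> A b) -> INR (length l) <= M.

From Stdlib Require Import Reals Lra Lia List ZArith Classical.
Open Scope R_scope.

(* A cube V of generation j lies in Q~(U, j, delta) only if, for some k with
   g(U) <= k <= gamma(j), it lies in U and meets a shrunk ball B(y_p, rho_p^delta)
   with p in T_k; call the set of such cubes the k-th layer.  By C_1, T_k splits
   into N_k families of pairwise disjoint balls.  Every ball of T_k contains the
   generation-k grid point nearest to its center, and for a fixed family and a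
   fixed grid point at most one ball of the family contains it; the cubes of
   generation j meeting the corresponding shrunk ball (of radius <= 2^-(k delta))
   fill a box with sides of 2 * 2^(j - k delta) + 3 cubes, and the relevant grid
   points fill a box with sides of 2^(k - g(U)) + 6 points.  Hence
      #layer_k <= N_k (2^(k-g(U)) + 6)^d (2 * 2^(j-k delta) + 3)^d
               <= 35^d 2^(d(j-g(U))) (F_k + N_k 2^(dk) 2^(-dj)),
   where F_k is the k-th term of the sum in the statement.  Summing over k,
   the terms N_k 2^(dk) 2^(-dj) form a geometric series dominated by twice its
   last one, N_gamma(j) 2^(d gamma(j)) 2^(-dj) <= 2^(-dj phi(2^-j)) by the
   definition of gamma(j).  This gives the theorem with C_d = 2 * 35^d.
   Cardinalities are bounded throughout by exhibiting covering lists. *)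

Definition rsum {X : Type} (f : X -> R) (l : list X) : R :=
  fold_right (fun a s => f a + s) 0 l.

Lemma rsum_app {X} (f : X -> R) l1 l2 : rsum f (l1 ++ l2) = rsum f l1 + rsum f l2.
Proof. induction l1 as [|a l1 IH]; simpl; [lra|]. rewrite IH; lra. Qed.

Lemma rsum_le {X} (f g : X -> R) l :
  (forall a, In a l -> f a <= g a) -> rsum f l <= rsum g l.
Proof.
  induction l as [|a l IH]; simpl; intros H; [lra|].
  assert (f a <= g a) by auto. assert (rsum f l <= rsum g l) by auto. lra.
Qed.

Lemma rsum_nonneg {X} (f : X -> R) l : (forall a, In a l -> 0 <= f a) -> 0 <= rsum f l.
Proof.
  induction l as [|a l IH]; simpl; intros H; [lra|].
  assert (0 <= f a) by auto. assert (0 <= rsum f l) by auto. lra.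
Qed.

Lemma rsum_const {X} (c : R) (l : list X) : rsum (fun _ => c) l = INR (length l) * c.
Proof.
  induction l as [|a l IH]; [simpl; lra|].
  simpl length. rewrite S_INR. simpl rsum. rewrite IH. lra.
Qed.

Lemma rsum_plus {X} (f g : X -> R) l : rsum (fun a => f a + g a) l = rsum f l + rsum g l.
Proof. induction l as [|a l IH]; simpl; [lra|]. rewrite IH; lra. Qed.

Lemma rsum_scal {X} (c : R) (f : X -> R) l : rsum (fun a => c * f a) l = c * rsum f l.
Proof. induction l as [|a l IH]; simpl; [lra|]. rewrite IH; lra. Qed.

Lemma sum_f_R0_rsum F n : sum_f_R0 F n = rsum F (seq 0 (S n)).
Proof.
  induction n as [|n IH]; [simpl; lra|].
  rewrite seq_S, rsum_app. simpl sum_f_R0. rewrite IH. simpl. lra.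
Qed.

Lemma rsum_seq_le (F : nat -> R) a b n : (forall k, 0 <= F k) -> (b <= n)%nat ->
  rsum F (seq a (b - a)) <= rsum F (seq 0 n).
Proof.
  intros HF Hbn.
  destruct (Nat.le_gt_cases a b) as [Hab | Hab].
  - replace n with (a + ((b - a) + (n - b)))%nat by lia.
    rewrite seq_app, seq_app, !rsum_app.
    assert (0 <= rsum F (seq 0 a)) by (apply rsum_nonneg; auto).
    assert (0 <= rsum F (seq (0 + a + (b - a)) (n - b))) by (apply rsum_nonneg; auto).
    simpl Nat.add in *. lra.
  - replace (b - a)%nat with 0%nat by lia. simpl. apply rsum_nonneg; auto.
Qed.

Lemma geom_sum_le q n : 2 <= q -> rsum (fun k => q ^ k) (seq 0 (S n)) <= 2 * q ^ n.
Proof.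
  intros Hq. induction n as [|n IH]; [simpl; lra|].
  rewrite seq_S, rsum_app. simpl rsum at 2. simpl (0 + S n)%nat.
  assert (0 <= q ^ n) by (apply pow_le; lra).
  simpl pow. nra.
Qed.

Definition covered (A : list nat -> Prop) (M : R) : Prop :=
  exists L : list (list nat), (forall b, A b -> In b L) /\ INR (length L) <= M.

Lemma covered_card A M : covered A M -> card_le A M.
Proof.
  intros [L [HL HM]] l Hl Hin.
  apply Rle_trans with (INR (length L)); auto.
  apply le_INR, NoDup_incl_length; auto.
  intros b Hb; apply HL, Hin, Hb.
Qed.

Lemma covered_mono (A B : list nat -> Prop) M M' :
  (forall b, A b -> B b) -> M <= M' -> covered B M -> covered A M'.
Proof. intros H HM [L [HL HL2]]. exists L; split; auto. lra. Qed.

Lemma covered_empty (A : list nat -> Prop) M :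
  (forall b, ~ A b) -> 0 <= M -> covered A M.
Proof.
  intros H HM. exists nil; split; simpl; [|lra].
  intros b Hb; exfalso; apply (H b Hb).
Qed.

Lemma covered_union {X : Type} (I : list X) (B : X -> list nat -> Prop) (M : X -> R)
  (A : list nat -> Prop) :
  (forall b, A b -> exists i, In i I /\ B i b) ->
  (forall i, In i I -> covered (B i) (M i)) -> covered A (rsum M I).
Proof.
  revert A. induction I as [|i I IH]; intros A HA HB.
  - apply covered_empty; simpl; [|lra].
    intros b Hb; destruct (HA b Hb) as [i [[] _]].
  - destruct (HB i (or_introl eq_refl)) as [L1 [H1 H1']].
    destruct (IH (fun b => exists i', In i' I /\ B i' b)) as [L2 [H2 H2']]; auto.
    { intros i' Hi'; apply HB; right; auto. }
    exists (L1 ++ L2); split.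
    + intros b Hb. apply in_or_app.
      destruct (HA b Hb) as [i' [[<-|Hi'] Hb']]; [left; auto | right; apply H2; eauto].
    + rewrite length_app, plus_INR. simpl. lra.
Qed.

Lemma covered_union_const {X : Type} (I : list X) (B : X -> list nat -> Prop) (M : R)
  (A : list nat -> Prop) :
  (forall b, A b -> exists i, In i I /\ B i b) ->
  (forall i, In i I -> covered (B i) M) -> covered A (INR (length I) * M).
Proof. intros HA HB. rewrite <- rsum_const. apply covered_union with B; auto. Qed.

(* The list of the natural numbers a with u <= a <= v. *)
Definition int_range (u v : R) : list nat :=
  seq (Z.to_nat (up (u - 1))) (Z.to_nat (up v) - Z.to_nat (up (u - 1))).

Lemma int_range_in u v (a : nat) : u <= INR a <= v -> In a (int_range u v).
Proof.
  intros [H1 H2]. unfold int_range. apply in_seq.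
  destruct (archimed (u - 1)) as [A1 A2]. destruct (archimed v) as [B1 B2].
  assert (Hlo : (up (u - 1) <= Z.of_nat a)%Z).
  { destruct (Z_le_gt_dec (up (u - 1)) (Z.of_nat a)) as [h|h]; auto.
    assert (h' : (Z.of_nat a + 1 <= up (u - 1))%Z) by lia.
    apply IZR_le in h'. rewrite plus_IZR, <- INR_IZR_INZ in h'. lra. }
  assert (Hhi : (Z.of_nat a < up v)%Z).
  { apply lt_IZR. rewrite <- INR_IZR_INZ. lra. }
  lia.
Qed.

Lemma int_range_length u v : u <= v -> INR (length (int_range u v)) <= v - u + 2.
Proof.
  intros Huv. unfold int_range. rewrite length_seq.
  destruct (archimed (u - 1)) as [A1 A2]. destruct (archimed v) as [B1 B2].
  set (lo := Z.to_nat (up (u - 1))). set (hi := Z.to_nat (up v)).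
  destruct (Nat.le_gt_cases hi lo) as [H|H].
  - replace (hi - lo)%nat with 0%nat by lia. simpl; lra.
  - rewrite minus_INR by lia.
    assert (INR hi = IZR (up v)).
    { unfold hi. rewrite INR_IZR_INZ, Z2Nat.id; auto. lia. }
    assert (IZR (up (u - 1)) <= INR lo).
    { unfold lo. destruct (Z_le_gt_dec 0 (up (u - 1))) as [h|h].
      - rewrite INR_IZR_INZ, Z2Nat.id by exact h. lra.
      - apply Rle_trans with 0; [apply IZR_le; lia | apply pos_INR]. }
    lra.
Qed.

Fixpoint product_list (L : nat -> list nat) (n : nat) : list (list nat) :=
  match n with
  | O => nil :: nil
  | S n' => flat_map (fun a => map (cons a) (product_list (fun i => L (S i)) n')) (L O)
  end.

Lemma product_list_in n : forall L b, length b = n ->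
  (forall i, (i < n)%nat -> In (nth i b 0%nat) (L i)) -> In b (product_list L n).
Proof.
  induction n as [|n IH]; intros L b Hl Hi.
  - destruct b; simpl in *; [auto | discriminate].
  - destruct b as [|a b]; simpl in Hl; [discriminate|].
    simpl. apply in_flat_map. exists a. split.
    + apply (Hi 0%nat); lia.
    + apply in_map, IH; [lia|]. intros i Hi'. apply (Hi (S i)). lia.
Qed.

Lemma product_list_length n : forall L (m : R), 0 <= m ->
  (forall i, (i < n)%nat -> INR (length (L i)) <= m) ->
  INR (length (product_list L n)) <= m ^ n.
Proof.
  induction n as [|n IH]; intros L m Hm Hi; [simpl; lra|].
  simpl product_list.
  assert (Hlen : forall l : list nat,
    length (flat_map (fun a => map (cons a) (product_list (fun i => L (S i)) n)) l)
    = (length l * length (product_list (fun i => L (S i)) n))%nat).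
  { induction l as [|a l IHl]; simpl; auto. rewrite length_app, length_map, IHl. lia. }
  rewrite Hlen, mult_INR. simpl pow.
  apply Rmult_le_compat; try apply pos_INR.
  - apply (Hi 0%nat); lia.
  - apply IH; auto. intros i Hi'; apply (Hi (S i)); lia.
Qed.

Lemma covered_box n (u v : nat -> R) (w : R) :
  (forall i, (i < n)%nat -> u i <= v i /\ v i - u i <= w) ->
  covered (fun b => length b = n /\ forall i, (i < n)%nat -> u i <= INR (nth i b 0%nat) <= v i)
    ((w + 2) ^ n).
Proof.
  intros H. exists (product_list (fun i => int_range (u i) (v i)) n). split.
  - intros b [Hl Hb]. apply product_list_in; auto. intros i Hi. apply int_range_in; auto.
  - destruct n; [simpl; lra|].
    apply product_list_length.
    + destruct (H 0%nat) as [h1 h2]; [lia|]. lra.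
    + intros i Hi. destruct (H i Hi) as [h1 h2].
      apply Rle_trans with (v i - u i + 2); [apply int_range_length; auto | lra].
Qed.

Lemma Rpower_pos x y : 0 < Rpower x y.
Proof. apply exp_pos. Qed.

Lemma Rpower2_le a b : a <= b -> Rpower 2 a <= Rpower 2 b.
Proof. intros; apply Rle_Rpower; lra. Qed.

Lemma Rpower2_le_inv a b : Rpower 2 a <= Rpower 2 b -> a <= b.
Proof.
  intros H. destruct (Rle_lt_dec a b) as [h|h]; auto.
  assert (Rpower 2 b < Rpower 2 a) by (apply Rpower_lt; lra). lra.
Qed.

Lemma Rpower2_ge1 a : 0 <= a -> 1 <= Rpower 2 a.
Proof. intros; rewrite <- (Rpower_O 2) by lra; apply Rpower2_le; auto. Qed.

Lemma Rpower2_le1 a : a <= 0 -> Rpower 2 a <= 1.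
Proof. intros; rewrite <- (Rpower_O 2) by lra; apply Rpower2_le; auto. Qed.

Lemma Rpower2_plus a b : Rpower 2 a * Rpower 2 b = Rpower 2 (a + b).
Proof. symmetry; apply Rpower_plus. Qed.

Lemma Rpower2_pow t d : Rpower 2 t ^ d = Rpower 2 (INR d * t).
Proof. rewrite <- Rpower_pow, Rpower_mult by apply Rpower_pos. f_equal; ring. Qed.

Lemma half_pow_pos k : 0 < (/2) ^ k.
Proof. apply pow_lt; lra. Qed.

Lemma half_pow_Rpower k : (/2) ^ k = Rpower 2 (- INR k).
Proof. rewrite Rpower_Ropp, Rpower_pow, pow_inv by lra. reflexivity. Qed.

Lemma Rpower2_div_half_pow a j : Rpower 2 a / (/2) ^ j = Rpower 2 (a + INR j).
Proof.
  rewrite half_pow_Rpower, Rpower_Ropp. unfold Rdiv.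
  rewrite Rinv_inv, Rpower2_plus. reflexivity.
Qed.

Lemma Rpower_le_base r t : 0 < r <= 1 -> 1 <= t -> Rpower r t <= r.
Proof.
  intros Hr Ht. replace t with (1 + (t - 1)) by ring.
  rewrite Rpower_plus, Rpower_1 by lra.
  assert (H : Rpower r (t - 1) <= Rpower 1 (t - 1)) by (apply Rle_Rpower_l; lra).
  unfold Rpower at 2 in H. rewrite ln_1, Rmult_0_r, exp_0 in H.
  pose proof (Rpower_pos r (t - 1)). nra.
Qed.

Lemma pow_affine_Rpower2_ge a c t d : 0 <= a -> 0 <= c -> 0 <= t ->
  (a * Rpower 2 t + c) ^ d <= (a + c) ^ d * Rpower 2 (INR d * t).
Proof.
  intros Ha Hc Ht. pose proof (Rpower2_ge1 t Ht).
  rewrite <- Rpower2_pow, <- Rpow_mult_distr.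
  apply pow_incr. split; nra.
Qed.

Lemma pow_affine_Rpower2_le a c t d : 0 <= a -> 0 <= c -> t <= 0 ->
  (a * Rpower 2 t + c) ^ d <= (a + c) ^ d.
Proof.
  intros Ha Hc Ht. pose proof (Rpower2_le1 t Ht). pose proof (Rpower_pos 2 t).
  apply pow_incr. split; nra.
Qed.

Lemma Rabs_le_between a b : Rabs a <= b -> - b <= a <= b.
Proof. unfold Rabs; destruct (Rcase_abs a); lra. Qed.

Lemma Rdiv_le_from a b c : 0 < c -> a <= b * c -> a / c <= b.
Proof.
  intros Hc H. apply Rmult_le_reg_r with c; auto.
  unfold Rdiv. rewrite Rmult_assoc, Rinv_l by lra. lra.
Qed.

Lemma le_div_iff a b c : 0 < c -> (a <= b / c <-> a * c <= b).
Proof.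
  intros Hc. unfold Rdiv. split; intros H.
  - apply Rmult_le_compat_r with (r := c) in H; [|lra].
    rewrite Rmult_assoc, Rinv_l, Rmult_1_r in H by lra. exact H.
  - apply Rmult_le_reg_r with c; auto. rewrite Rmult_assoc, Rinv_l, Rmult_1_r by lra. exact H.
Qed.

Definition grid_point (k : nat) (z : list nat) : pt :=
  fun i => INR (nth i z 0%nat) * (/2) ^ k.

Definition grid_round (d k : nat) (y : pt) : list nat :=
  map (fun i => Z.to_nat (up (y i / (/2) ^ k - /2))) (seq 0 d).

Lemma grid_round_length d k y : length (grid_round d k y) = d.
Proof. unfold grid_round; rewrite length_map, length_seq; auto. Qed.

Lemma grid_round_dist d k y i : (i < d)%nat -> 0 <= y i ->
  Rabs (grid_point k (grid_round d k y) i - y i) <= (/2) ^ k / 2.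
Proof.
  intros Hi Hy. apply Rabs_le. unfold grid_point, grid_round.
  set (f := fun i => Z.to_nat (up (y i / (/2) ^ k - /2))).
  rewrite nth_indep with (d' := f 0%nat) by (rewrite length_map, length_seq; auto).
  rewrite map_nth, seq_nth by auto. unfold f; simpl.
  set (h := (/2) ^ k). assert (Hh : 0 < h) by apply half_pow_pos.
  set (t := y i / h - /2).
  destruct (archimed t) as [A1 A2].
  assert (Ht : - / 2 <= t) by (unfold t; assert (0 <= y i / h) by (apply Rle_mult_inv_pos; lra); lra).
  assert (Hz : (0 <= up t)%Z).
  { assert (Hm : IZR (-1) < IZR (up t)) by (simpl; lra). apply lt_IZR in Hm. lia. }
  rewrite INR_IZR_INZ, Z2Nat.id by exact Hz.
  assert (E : y i = (t + /2) * h) by (unfold t; field; lra).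
  rewrite E. split; nra.
Qed.

Lemma T_radius d x r k p : T d x r k p -> (/2) ^ k / 2 < r p <= (/2) ^ k.
Proof. intros [_ [H1 H2]]. simpl in H1. split; lra. Qed.

Lemma ball_contains_grid_point d x r k p :
  is_system d x r -> T d x r k p -> ball d (x p) (r p) (grid_point k (grid_round d k (x p))).
Proof.
  intros [Hx _] Tp q Hq.
  pose proof (grid_round_dist d k (x p) q Hq (proj1 (Hx p q Hq))) as H.
  pose proof (T_radius _ _ _ _ _ Tp). lra.
Qed.

Lemma shrunk_radius_le d x r k p delta : T d x r k p -> 0 <= delta ->
  Rpower (r p) delta <= Rpower 2 (- (INR k * delta)).
Proof.
  intros Tp Hd. pose proof (T_radius _ _ _ _ _ Tp). pose proof (half_pow_pos k).
  apply Rle_trans with (Rpower ((/2) ^ k) delta).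
  - apply Rle_Rpower_l; lra.
  - rewrite half_pow_Rpower, Rpower_mult. right; f_equal; ring.
Qed.

Lemma shrunk_radius_le_radius d x r k p delta : T d x r k p -> 1 <= delta ->
  Rpower (r p) delta <= r p.
Proof.
  intros Tp Hd. pose proof (T_radius _ _ _ _ _ Tp). pose proof (half_pow_pos k).
  assert ((/2) ^ k <= 1) by (rewrite <- (pow1 k); apply pow_incr; lra).
  apply Rpower_le_base; lra.
Qed.

Lemma cubes_meeting_ball_cover d j (c : pt) R0 : 0 <= R0 ->
  covered (fun b => length b = d /\ exists y, cube d j b y /\ ball d c R0 y)
    ((2 * (R0 / (/2) ^ j) + 3) ^ d).
Proof.
  intros HR0. set (hj := (/2) ^ j). assert (Hhj : 0 < hj) by apply half_pow_pos.
  assert (0 <= R0 / hj) by (apply Rle_mult_inv_pos; lra).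
  replace (2 * (R0 / hj) + 3) with ((2 * (R0 / hj) + 1) + 2) by ring.
  apply covered_mono with
    (B := fun b => length b = d /\ forall q, (q < d)%nat ->
        (c q - R0) / hj - 1 <= INR (nth q b 0%nat) <= (c q + R0) / hj)
    (M := (2 * (R0 / hj) + 1 + 2) ^ d); [| lra |].
  - intros b [Hl [y [Hcube Hball]]]. split; auto. intros q Hq.
    specialize (Hcube q Hq). specialize (Hball q Hq). apply Rabs_le_between in Hball.
    fold hj in Hcube. split.
    + assert ((c q - R0) / hj <= INR (nth q b 0%nat) + 1); [apply Rdiv_le_from|]; lra.
    + apply le_div_iff; lra.
  - apply covered_box. intros q Hq.
    assert (E : (c q + R0) / hj - ((c q - R0) / hj - 1) = 2 * (R0 / hj) + 1)
      by (field; lra).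
    lra.
Qed.

Lemma grid_points_near_cube_cover d k gU (aU : list nat) :
  covered (fun z => length z = d /\
             exists y, cube d gU aU y /\ ball d (grid_point k z) (2 * (/2) ^ k) y)
    ((Rpower 2 (INR k - INR gU) + 6) ^ d).
Proof.
  set (H := (/2) ^ gU). set (h := (/2) ^ k).
  assert (HH : 0 < H) by apply half_pow_pos. assert (Hh : 0 < h) by apply half_pow_pos.
  assert (HHh : H / h = Rpower 2 (INR k - INR gU)).
  { unfold H, h. rewrite half_pow_Rpower, Rpower2_div_half_pow. f_equal; ring. }
  rewrite <- HHh. replace (H / h + 6) with ((H / h + 4) + 2) by ring.
  apply covered_mono with
    (B := fun z => length z = d /\ forall q, (q < d)%nat ->
        (INR (nth q aU 0%nat) * H - 2 * h) / h <= INR (nth q z 0%nat)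
          <= ((INR (nth q aU 0%nat) + 1) * H + 2 * h) / h)
    (M := (H / h + 4 + 2) ^ d); [| lra |].
  - intros z [Hl [y [Hcube Hball]]]. split; auto. intros q Hq.
    specialize (Hcube q Hq). specialize (Hball q Hq). apply Rabs_le_between in Hball.
    unfold grid_point in Hball. fold h in Hball. fold H in Hcube.
    split; [apply Rdiv_le_from | apply le_div_iff]; lra.
  - apply covered_box. intros q Hq.
    assert (0 < H / h) by (apply Rdiv_lt_0_compat; auto).
    assert (E : ((INR (nth q aU 0%nat) + 1) * H + 2 * h) / h
                - (INR (nth q aU 0%nat) * H - 2 * h) / h = H / h + 4) by (field; lra).
    lra.
Qed.

Definition disjoint_family (d : nat) (x : nat -> pt) (r : nat -> R) (k : nat)
    (col : nat -> nat) : Prop :=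
  forall n m, T d x r k n -> T d x r k m -> n <> m -> col n = col m ->
    ~ (exists y, ball d (x n) (r n) y /\ ball d (x m) (r m) y).

Definition meets_shrunk (d : nat) (x : nat -> pt) (r : nat -> R) (delta : R)
    (p j : nat) (b : list nat) : Prop :=
  exists y, cube d j b y /\ ball d (x p) (Rpower (r p) delta) y.

Definition layer (d : nat) (x : nat -> pt) (r : nat -> R) (gU : nat) (aU : list nat)
    (j : nat) (delta : R) (k : nat) (b : list nat) : Prop :=
  length b = d /\ (forall y, cube d j b y -> cube d gU aU y) /\
  exists p, T d x r k p /\ meets_shrunk d x r delta p j b.

(* Within one disjoint family, at most one ball contains a given grid point z,
   so the cubes meeting the corresponding shrunk ball are those meeting one
   ball of radius 2^-(k delta). *)
Lemma family_point_cover d x r k col j delta i z :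
  0 <= delta -> disjoint_family d x r k col ->
  covered (fun b => length b = d /\ exists p, T d x r k p /\ col p = i /\
             ball d (x p) (r p) (grid_point k z) /\ meets_shrunk d x r delta p j b)
    ((2 * Rpower 2 (INR j - INR k * delta) + 3) ^ d).
Proof.
  intros Hd Hdisj.
  assert (Hpos : 0 <= (2 * Rpower 2 (INR j - INR k * delta) + 3) ^ d).
  { apply pow_le. pose proof (Rpower_pos 2 (INR j - INR k * delta)). lra. }
  destruct (classic (exists p, T d x r k p /\ col p = i /\ ball d (x p) (r p) (grid_point k z)))
    as [[p0 [Tp0 [cp0 bp0]]] | Hno].
  2:{ apply covered_empty; auto.
      intros b [_ [p [Tp [cp [bp _]]]]]. apply Hno; exists p; auto. }
  set (R0 := Rpower 2 (- (INR k * delta))).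
  apply covered_mono with
    (B := fun b => length b = d /\ exists y, cube d j b y /\ ball d (x p0) R0 y)
    (M := (2 * (R0 / (/2) ^ j) + 3) ^ d).
  - intros b [Hl [p [Tp [cp [bp [y [Hcube Hball]]]]]]].
    assert (Hp : p = p0).
    { destruct (Nat.eq_dec p p0) as [e | ne]; auto. exfalso.
      apply (Hdisj p p0 Tp Tp0 ne); [congruence|]. exists (grid_point k z); auto. }
    subst p. split; auto. exists y. split; auto. intros q Hq.
    pose proof (shrunk_radius_le _ _ _ _ _ _ Tp0 Hd). specialize (Hball q Hq). fold R0 in H. lra.
  - right. unfold R0. rewrite Rpower2_div_half_pow.
    replace (- (INR k * delta) + INR j) with (INR j - INR k * delta) by ring. reflexivity.
  - apply cubes_meeting_ball_cover. left; apply Rpower_pos.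
Qed.

(* Counting one layer: a cube of the layer meets the shrunk ball of some p in
   T_k, determined by its label (< Nk) and the grid point nearest to x_p, which
   lies close to U. *)
Lemma layer_cover d x r Nk col gU aU j delta k :
  is_system d x r -> 1 <= delta ->
  (forall n, T d x r k n -> (col n < Nk)%nat) -> disjoint_family d x r k col ->
  covered (layer d x r gU aU j delta k)
    (INR Nk * ((Rpower 2 (INR k - INR gU) + 6) ^ d *
               (2 * Rpower 2 (INR j - INR k * delta) + 3) ^ d)).
Proof.
  intros Hsys Hd Hcol Hdisj.
  destruct (grid_points_near_cube_cover d k gU aU) as [Zl [HZin HZlen]].
  set (Mb := (2 * Rpower 2 (INR j - INR k * delta) + 3) ^ d).
  assert (HMb : 0 <= Mb).
  { apply pow_le. pose proof (Rpower_pos 2 (INR j - INR k * delta)). lra. }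
  apply covered_mono with (B := layer d x r gU aU j delta k)
    (M := INR (length (list_prod (seq 0 Nk) Zl)) * Mb); auto.
  { rewrite length_prod, mult_INR, length_seq, Rmult_assoc.
    apply Rmult_le_compat_l; [apply pos_INR|]. apply Rmult_le_compat_r; auto. }
  apply covered_union_const with
    (B := fun iz b => length b = d /\ exists p, T d x r k p /\ col p = fst iz /\
            ball d (x p) (r p) (grid_point k (snd iz)) /\ meets_shrunk d x r delta p j b).
  - intros b [Hl [HU [p [Tp Hmeet]]]].
    exists (col p, grid_round d k (x p)). split.
    + apply in_prod; [apply in_seq; specialize (Hcol p Tp); lia|].
      apply HZin. split; [apply grid_round_length|].
      destruct Hmeet as [y [Hcube Hball]]. exists y. split; auto.
      intros q Hq. specialize (Hball q Hq). apply Rabs_le_between in Hball.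
      destruct Hsys as [Hx _].
      pose proof (grid_round_dist d k (x p) q Hq (proj1 (Hx p q Hq))) as Hz.
      apply Rabs_le_between in Hz.
      pose proof (shrunk_radius_le_radius _ _ _ _ _ _ Tp Hd).
      pose proof (T_radius _ _ _ _ _ Tp). apply Rabs_le. lra.
    + split; auto. exists p.
      split; [exact Tp|]. split; [reflexivity|].
      split; [apply ball_contains_grid_point; auto | exact Hmeet].
  - intros [i z] _. apply family_point_cover; auto; lra.
Qed.

Lemma Qtilde_in_layers d x r N phi gU aU j delta g b :
  is_gamma d N phi j g -> Qtilde d x r N phi gU aU j delta b ->
  exists k, In k (seq gU (S g - gU)) /\ layer d x r gU aU j delta k b.
Proof.
  intros [Hg Hgmax] [[Hl _] [HU [y [Hcube [k [[g' [[Hg' Hg'max] Hk]] [p [Tp Hball]]]]]]]].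
  assert (g' = g) by (specialize (Hgmax g' Hg'); specialize (Hg'max g Hg); lia). subst g'.
  exists k. split; [apply in_seq; lia|].
  split; [exact Hl|]. split; [exact HU|]. exists p. split; [exact Tp|]. exists y; auto.
Qed.

Definition series_term (d : nat) (psi : R -> R) (gU j : nat) (delta : R) (k : nat) : R :=
  if Nat.leb gU k then
    if Rle_dec (INR k) (INR j / delta) then
      Rpower 2 (- (INR d * INR k * (delta - 1 - psi ((/2) ^ k))))
    else 0
  else 0.

Lemma series_term_nonneg d psi gU j delta k : 0 <= series_term d psi gU j delta k.
Proof.
  unfold series_term. destruct (Nat.leb gU k); [|lra].
  destruct (Rle_dec _ _); [left; apply Rpower_pos | lra].
Qed.

Lemma series_sum_nonneg d psi gU j delta : 0 <= sum_f_R0 (series_term d psi gU j delta) j.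
Proof.
  rewrite sum_f_R0_rsum. apply rsum_nonneg. intros; apply series_term_nonneg.
Qed.


Lemma coarse_factor_bound d gU k : (gU <= k)%nat ->
  (Rpower 2 (INR k - INR gU) + 6) ^ d <= 7 ^ d * Rpower 2 (INR d * (INR k - INR gU)).
Proof.
  intros Hk. rewrite <- (Rmult_1_l (Rpower 2 (INR k - INR gU))).
  replace 7 with (1 + 6) by ring.
  apply pow_affine_Rpower2_ge; try lra. apply le_INR in Hk. lra.
Qed.

(* The first
   term arises when the cubes of generation j are smaller than the shrunk
   balls, the second one otherwise. *)
Lemma layer_size_bound (d k j gU : nat) (delta psik : R) (Nk : nat) :
  (gU <= k)%nat -> 0 < delta -> INR Nk = Rpower 2 (INR d * INR k * psik) ->
  INR Nk * ((Rpower 2 (INR k - INR gU) + 6) ^ d *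
            (2 * Rpower 2 (INR j - INR k * delta) + 3) ^ d)
  <= 35 ^ d * Rpower 2 (INR d * (INR j - INR gU)) *
     ((if Rle_dec (INR k) (INR j / delta)
       then Rpower 2 (- (INR d * INR k * (delta - 1 - psik))) else 0)
      + INR Nk * Rpower 2 (INR d * INR k) * Rpower 2 (- (INR d * INR j))).
Proof.
  intros Hk Hd HN.
  set (P := Rpower 2 (INR d * (INR j - INR gU))).
  set (Xc := Rpower 2 (INR d * (INR k - INR gU))).
  set (e := INR Nk * Rpower 2 (INR d * INR k) * Rpower 2 (- (INR d * INR j))).
  assert (He : 0 <= e).
  { pose proof (Rpower_pos 2 (INR d * INR k)). pose proof (Rpower_pos 2 (- (INR d * INR j))).
    unfold e. apply Rmult_le_pos; [apply Rmult_le_pos|]; [apply pos_INR | lra | lra]. }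
  assert (HP : 0 < P) by apply Rpower_pos.
  assert (H35 : 0 <= 35 ^ d * P) by (apply Rmult_le_pos; [apply pow_le|]; lra).
  assert (Hstep : forall B, (2 * Rpower 2 (INR j - INR k * delta) + 3) ^ d <= 5 ^ d * B ->
    INR Nk * ((Rpower 2 (INR k - INR gU) + 6) ^ d *
              (2 * Rpower 2 (INR j - INR k * delta) + 3) ^ d)
    <= 35 ^ d * (INR Nk * Xc * B)).
  { intros B HB. pose proof (coarse_factor_bound d gU k Hk) as Hcoarse.
    assert (E35 : 35 ^ d = 7 ^ d * 5 ^ d) by (rewrite <- Rpow_mult_distr; f_equal; ring).
    replace (35 ^ d * (INR Nk * Xc * B)) with (INR Nk * ((7 ^ d * Xc) * (5 ^ d * B)))
      by (rewrite E35; ring).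
    apply Rmult_le_compat_l; [apply pos_INR|].
    apply Rmult_le_compat; auto; apply pow_le;
      pose proof (Rpower_pos 2 (INR k - INR gU));
      pose proof (Rpower_pos 2 (INR j - INR k * delta)); lra. }
  destruct (Rle_dec (INR k) (INR j / delta)) as [Hkj | Hkj];
    [apply le_div_iff in Hkj | rewrite le_div_iff in Hkj]; auto.
  - eapply Rle_trans.
    { apply Hstep. replace 5 with (2 + 3) by ring. apply pow_affine_Rpower2_ge; lra. }
    replace (INR Nk * Xc * Rpower 2 (INR d * (INR j - INR k * delta)))
      with (P * Rpower 2 (- (INR d * INR k * (delta - 1 - psik))))
      by (unfold P, Xc; rewrite HN, !Rpower2_plus; f_equal; ring).
    rewrite <- Rmult_assoc. apply Rmult_le_compat_l; lra.
  - eapply Rle_trans.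
    { apply Hstep. rewrite Rmult_1_r. replace 5 with (2 + 3) by ring.
      apply pow_affine_Rpower2_le; lra. }
    replace (INR Nk * Xc * 1) with (P * e)
      by (unfold P, Xc, e; rewrite Rmult_1_r, Rmult_comm, !Rmult_assoc, !Rpower2_plus;
          f_equal; f_equal; ring).
    rewrite <- Rmult_assoc. apply Rmult_le_compat_l; lra.
Qed.

Lemma Rpower2_nat_mul d k : Rpower 2 (INR d * INR k) = (2 ^ d) ^ k.
Proof. rewrite <- mult_INR, Rpower_pow, pow_mult by lra. reflexivity. Qed.

Lemma nat_seq_mono (N : nat -> nat) k g :
  (forall n, (N n <= N (S n))%nat) -> (k <= g)%nat -> (N k <= N g)%nat.
Proof. intros HN Hkg. induction Hkg as [|m _ IH]; [lia|]. specialize (HN m). lia. Qed.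

(* gamma(j) <= j, since N_gamma(j) >= 1 and phi >= 0. *)
Lemma gamma_le d N phi j g :
  (1 <= d)%nat -> (forall k, (1 <= N k)%nat) -> 0 <= phi ((/2) ^ j) ->
  gamma_set d N phi j g -> (g <= j)%nat.
Proof.
  intros Hd HN1 Hphi Hg. unfold gamma_set in Hg.
  assert (HA : Rpower 2 (- (INR d * INR j * phi ((/2) ^ j))) <= 1).
  { apply Rpower2_le1.
    assert (0 <= INR d * INR j) by (apply Rmult_le_pos; apply pos_INR). nra. }
  assert (1 <= INR (N g)) by (apply (le_INR 1); auto).
  pose proof (Rpower_pos 2 (INR d * INR g)). pose proof (Rpower_pos 2 (INR d * INR j)).
  assert (Hdg : Rpower 2 (INR d * INR g) <= Rpower 2 (INR d * INR j)) by nra.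
  apply Rpower2_le_inv in Hdg.
  assert (1 <= INR d) by (apply (le_INR 1); auto).
  apply INR_le. nra.
Qed.

(* By monotonicity of N and the definition of gamma(j), the geometric series
   sum_{k <= gamma(j)} N_k 2^(dk) 2^(-dj) is at most 2 * 2^(-dj phi(2^-j)). *)
Lemma gamma_tail_bound d N phi j g gU :
  (1 <= d)%nat -> (forall k, (N k <= N (S k))%nat) -> gamma_set d N phi j g ->
  rsum (fun k => INR (N k) * Rpower 2 (INR d * INR k) * Rpower 2 (- (INR d * INR j)))
       (seq gU (S g - gU))
  <= 2 * Rpower 2 (- (INR d * INR j * phi ((/2) ^ j))).
Proof.
  intros Hd HNmono Hg. unfold gamma_set in Hg. rewrite Rpower2_nat_mul in Hg.
  set (A := Rpower 2 (- (INR d * INR j * phi ((/2) ^ j)))) in *.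
  set (c := INR (N g) * Rpower 2 (- (INR d * INR j))).
  assert (Hc : 0 <= c).
  { unfold c. apply Rmult_le_pos; [apply pos_INR | left; apply Rpower_pos]. }
  assert (Hq : 2 <= 2 ^ d) by (replace 2 with (2 ^ 1) at 1 by ring; apply Rle_pow; [lra | lia]).
  apply Rle_trans with (rsum (fun k => c * (2 ^ d) ^ k) (seq gU (S g - gU))).
  - apply rsum_le. intros k Hk. apply in_seq in Hk.
    assert (HNk : (N k <= N g)%nat) by (apply nat_seq_mono; auto; lia).
    apply le_INR in HNk. rewrite Rpower2_nat_mul.
    pose proof (Rpower_pos 2 (- (INR d * INR j))).
    assert (0 <= (2 ^ d) ^ k) by (apply pow_le; lra).
    unfold c. replace (INR (N g) * Rpower 2 (- (INR d * INR j)) * (2 ^ d) ^ k)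
      with (INR (N g) * (2 ^ d) ^ k * Rpower 2 (- (INR d * INR j))) by ring.
    apply Rmult_le_compat_r; [lra|]. apply Rmult_le_compat_r; lra.
  - rewrite rsum_scal.
    assert (Hgeo : rsum (fun k => (2 ^ d) ^ k) (seq gU (S g - gU)) <= 2 * (2 ^ d) ^ g).
    { eapply Rle_trans; [apply rsum_seq_le; [intros; apply pow_le; lra | apply le_n] |].
      apply geom_sum_le; auto. }
    assert (Einv : Rpower 2 (- (INR d * INR j)) * Rpower 2 (INR d * INR j) = 1).
    { rewrite Rpower2_plus, Rplus_opp_l. apply Rpower_O; lra. }
    pose proof (Rpower_pos 2 (- (INR d * INR j))).
    apply Rle_trans with (c * (2 * (2 ^ d) ^ g)); [apply Rmult_le_compat_l; auto|].
    replace (c * (2 * (2 ^ d) ^ g))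
      with (2 * Rpower 2 (- (INR d * INR j)) * (INR (N g) * (2 ^ d) ^ g)) by (unfold c; ring).
    replace (2 * A) with (2 * Rpower 2 (- (INR d * INR j)) * (A * Rpower 2 (INR d * INR j)))
      by (rewrite <- (Rmult_1_r (2 * A)), <- Einv; ring).
    apply Rmult_le_compat_l; lra.
Qed.

Lemma layers_total_bound d N psi phi gU j g delta :
  (1 <= d)%nat -> (forall k, (N k <= N (S k))%nat) ->
  (forall k, INR (N k) = Rpower 2 (INR d * INR k * psi ((/2) ^ k))) ->
  gamma_set d N phi j g -> (g <= j)%nat -> (gU <= j)%nat -> 0 < delta ->
  rsum (fun k => INR (N k) * ((Rpower 2 (INR k - INR gU) + 6) ^ d *
                              (2 * Rpower 2 (INR j - INR k * delta) + 3) ^ d))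
       (seq gU (S g - gU))
  <= 2 * 35 ^ d * Rpower 2 (INR d * (INR j - INR gU)) *
     (Rpower 2 (- (INR d * INR j * phi ((/2) ^ j))) +
      sum_f_R0 (series_term d psi gU j delta) j).
Proof.
  intros Hd HNmono HNpsi Hg Hgj HgUj Hdelta.
  set (P := 35 ^ d * Rpower 2 (INR d * (INR j - INR gU))).
  set (e := fun k => INR (N k) * Rpower 2 (INR d * INR k) * Rpower 2 (- (INR d * INR j))).
  assert (HP : 0 <= P).
  { unfold P. apply Rmult_le_pos; [apply pow_le; lra | left; apply Rpower_pos]. }
  apply Rle_trans with (rsum (fun k => P * (series_term d psi gU j delta k + e k))
                             (seq gU (S g - gU))).
  { apply rsum_le. intros k Hk. apply in_seq in Hk.
    unfold series_term, e, P. replace (Nat.leb gU k) with true by (symmetry; apply Nat.leb_le; lia).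
    apply layer_size_bound; auto. lia. }
  rewrite rsum_scal, rsum_plus.
  assert (HF : rsum (series_term d psi gU j delta) (seq gU (S g - gU))
               <= sum_f_R0 (series_term d psi gU j delta) j).
  { rewrite sum_f_R0_rsum. apply rsum_seq_le; [apply series_term_nonneg | lia]. }
  pose proof (gamma_tail_bound d N phi j g gU Hd HNmono Hg) as He. fold e in He.
  pose proof (Rpower_pos 2 (- (INR d * INR j * phi ((/2) ^ j)))).
  pose proof (series_sum_nonneg d psi gU j delta).
  unfold P in *. nra.
Qed.

Theorem mainTheorem3 :
  forall d : nat, (1 <= d)%nat ->
  exists C : R,
  forall (x : nat -> pt) (r : nat -> R) (N : nat -> nat) (psi phi : R -> R),
    is_system d x r -> cond_C1 d x r N -> psi_assoc d N psi -> inPhi phi ->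
  forall (delta : R) (gU : nat) (aU : list nat) (j : nat),
    1 < delta -> (1 <= gU)%nat -> is_dyadic d gU aU ->
    delta * INR gU <= INR j ->
    card_le (Qtilde d x r N phi gU aU j delta)
      (C * Rpower 2 (INR d * (INR j - INR gU)) *
         (Rpower 2 (- (INR d * INR j * phi ((/2) ^ j))) +
          sum_f_R0 (fun k =>
            if Nat.leb gU k then
              if Rle_dec (INR k) (INR j / delta) then
                Rpower 2 (- (INR d * INR k * (delta - 1 - psi ((/2) ^ k))))
              else 0
            else 0) j)).
Proof.
  intros d Hd. exists (2 * 35 ^ d).
  intros x r N psi phi Hsys HC1 Hpsi Hphi delta gU aU j Hdelta HgU _ HgUj.
  destruct HC1 as [HN1 [HNmono [_ [col Hcol]]]].
  destruct Hpsi as [_ [_ [_ HNpsi]]].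
  destruct Hphi as [Hphi0 _].
  assert (HgUj' : (gU <= j)%nat).
  { apply INR_le.
    assert (0 <= (delta - 1) * INR gU) by (apply Rmult_le_pos; [lra | apply pos_INR]). lra. }
  apply covered_card.
  destruct (classic (exists g, is_gamma d N phi j g)) as [[g Hg] | Hno].
  - apply covered_mono with
      (B := fun b => exists k, In k (seq gU (S g - gU)) /\ layer d x r gU aU j delta k b)
      (M := rsum (fun k => INR (N k) * ((Rpower 2 (INR k - INR gU) + 6) ^ d *
                   (2 * Rpower 2 (INR j - INR k * delta) + 3) ^ d)) (seq gU (S g - gU))).
    + intros b Hb. eapply Qtilde_in_layers; eauto.
    + apply layers_total_bound; auto; [apply Hg | | lra].
      apply (gamma_le d N phi j g); auto; [apply Hphi0; left; apply half_pow_pos | apply Hg].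
    + apply covered_union with (B := layer d x r gU aU j delta); auto.
      intros k Hk. apply in_seq in Hk. destruct (Hcol k) as [Hc1 Hc2]; [lia|].
      apply layer_cover with (col := col k); auto; lra.
  - (* without gamma(j), Q~(U, j, delta) is empty *)
    apply covered_empty.
    + intros b [_ [_ [_ [_ [_ [[g [Hg _]] _]]]]]]. apply Hno; eauto.
    + pose proof (Rpower_pos 2 (INR d * (INR j - INR gU))).
      pose proof (Rpower_pos 2 (- (INR d * INR j * phi ((/2) ^ j)))).
      pose proof (series_sum_nonneg d psi gU j delta).
      assert (0 < 35 ^ d) by (apply pow_lt; lra).
      change (fun k => if Nat.leb gU k then _ else 0) with (series_term d psi gU j delta).
      apply Rmult_le_pos; [|lra]. apply Rmult_le_pos; lra.
Qed.
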